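(* Let $d\ge3$, let $C$ be a set of lines on ${\rm F}_d$ and put $C^s=C\cap\mathcal{L}^s$ for $s=0,1,2$. Then: (a) $C^0$ consists of pairwise disjoint lines if and only if $C^0=\{L^0_{a_1,b_1},\dots,L^0_{a_m,b_m}\}$ with $\#C^0=m$, $0\le a_1<\dots<a_m\le d-1$, and there is a permutation $\sigma$ of $R_d$ with $\sigma(a_i)=b_i$ for all $i$; (b) $C^1$ consists of pairwise disjoint lines if and only if $C^1=\{L^1_{a_1,b_1},\dots,L^1_{a_m,b_m}\}$ with $\#C^1=m$, $0\le b_1<\dots<b_m\le d-1$, and $\varphi_{d,+}$ restricted to $\{(a_i,b_i)\}_{i=1}^m$ is injective; (c) $C^2$ consists of pairwise disjoint lines if and only if $C^2=\{L^2_{a_1,b_1},\dots,L^2_{a_m,b_m}\}$ with $\#C^2=m$, $0\le b_1<\dots<b_m\le d-1$, and $\varphi_{d,+}$ restricted to $\{(a_i,b_i)\}_{i=1}^m$ is injective.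
   Context: ${\rm F}_d\subset\mathbb{P}^3(\mathbb{C})$ is the surface $x^d-y^d-z^d+w^d=0$; $R_d=\{0,\dots,d-1\}$ and $r_d$ denotes remainder mod $d$. Fix a primitive $d$-th root of unity $\eta$ and $v\in\mathbb{C}$ with $v^d=-1$. For $k,i\in R_d$ define $L^0_{k,i}:\{y=\eta^i x,\ w=\eta^k z\}$, $L^1_{k,i}:\{x=\eta^{k+i}z,\ y=\eta^i w\}$, $L^2_{k,i}:\{x=v\eta^i w,\ y=v\eta^{k+i}z\}$, and $\mathcal{L}^s=\{L^s_{k,i}\}_{k,i\in R_d}$; these are all the lines on ${\rm F}_d$. Define $\varphi_{d,+}:R_d\times R_d\to R_d$ by $\varphi_{d,+}(k,i)=r_d(i+k)$. *)

From HB Require Import structures.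
From mathcomp Require Import all_boot all_order all_algebra.
From mathcomp Require Import fingroup perm complex Rstruct.
Set Implicit Arguments. Unset Strict Implicit. Unset Printing Implicit Defensive.
Import Order.TTheory GRing.Theory Num.Theory.
Local Open Scope ring_scope.

Definition CC : Type := complex Rdefinitions.R.

(* Homogeneous coordinates (x, y, z, w) of a point of P^3(C):
   a nonzero vector of C^4 (the equations below are homogeneous,
   so working with representatives is harmless). *)
Definition nonzero_pt (x y z w : CC) : Prop :=
  ~ (x = 0 /\ y = 0 /\ z = 0 /\ w = 0).

Definition on_Fd (d : nat) (x y z w : CC) : Prop :=
  x ^+ d - y ^+ d - z ^+ d + w ^+ d = 0.

(* Lines L^s_{k,i}, s = 0,1,2, as predicates on homogeneous coordinates,
   for a fixed primitive d-th root of unity eta and v with v^d = -1.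
   L^0_{k,i}: y = eta^i x,  w = eta^k z
   L^1_{k,i}: x = eta^(k+i) z, y = eta^i w
   L^2_{k,i}: x = v eta^i w, y = v eta^(k+i) z *)
Definition on_line (eta v : CC) (s : 'I_3) (k i : nat) (x y z w : CC) : Prop :=
  match val s with
  | 0 => y = eta ^+ i * x /\ w = eta ^+ k * z
  | 1 => x = eta ^+ (k + i) * z /\ y = eta ^+ i * w
  | _ => x = v * eta ^+ i * w /\ y = v * eta ^+ (k + i) * z
  end.

Definition lines_disjoint (eta v : CC) (s : 'I_3) (k1 i1 k2 i2 : nat) : Prop :=
  forall x y z w : CC, nonzero_pt x y z w ->
    ~ (on_line eta v s k1 i1 x y z w /\ on_line eta v s k2 i2 x y z w).

(* A set of lines on F_d is a set of labels (s, (k, i)) with s in {0,1,2},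
   k, i in R_d; the label (s,(k,i)) stands for the line L^s_{k,i}. *)
Definition line_label (d : nat) : finType := ('I_3 * ('I_d * 'I_d))%type.

Definition Cpart (d : nat) (C : {set line_label d}) (s : 'I_3) : {set 'I_d * 'I_d} :=
  [set ki | (s, ki) \in C].

Definition pairwise_disjoint (d : nat) (eta v : CC) (s : 'I_3)
    (Cs : {set 'I_d * 'I_d}) : Prop :=
  forall p q, p \in Cs -> q \in Cs -> p != q ->
    lines_disjoint eta v s p.1 p.2 q.1 q.2.

Definition phi_plus (d : nat) (p : 'I_d * 'I_d) : nat := (p.2 + p.1) %% d.

Definition fam0 : 'I_3 := @Ordinal 3 0 isT.
Definition fam1 : 'I_3 := @Ordinal 3 1 isT.
Definition fam2 : 'I_3 := @Ordinal 3 2 isT.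

From HB Require Import structures.
From mathcomp Require Import all_boot all_order all_algebra.
From mathcomp Require Import fingroup perm complex Rstruct.
Import Order.TTheory GRing.Theory Num.Theory.
Set Implicit Arguments. Unset Strict Implicit. Unset Printing Implicit Defensive.
Local Open Scope ring_scope.

(* Each line L^s_{k,i} is the graph of a diagonal linear map between two
   complementary pairs of coordinates, e.g. L^0_{k,i} = {(x, eta^i x, z, eta^k z)},
   and two such graphs meet in P^3 iff they have a common slope in one of the two
   pairs.  The slopes are eta^i, eta^k on L^0, and they are determined by i and by
   i + k mod d on L^1 and L^2.  Hence C^s is pairwise disjoint iff two labellings
   are injective on it: k and i for s = 0, i and phi_{d,+} for s = 1, 2.  For s = 0
   the pairs (k, i) then form a partial bijection of R_d, which extends to a
   permutation; listing C^s by increasing k (resp. i) gives the enumerations. *)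

Lemma distinct_slopes_eq0 {R : idomainType} (a1 a2 x y : R) :
  a1 != a2 -> y = a1 * x -> y = a2 * x -> x = 0 /\ y = 0.
Proof.
move=> a12 y1 y2; have /eqP : (a1 - a2) * x = 0 by rewrite mulrBl -y1 -y2 subrr.
rewrite mulf_eq0 subr_eq0 (negbTE a12) => /eqP x0.
by rewrite y1 x0 mulr0.
Qed.

Definition graph_lines_disjoint (a1 b1 a2 b2 : CC) : Prop :=
  forall x1 y1 x2 y2 : CC, nonzero_pt x1 y1 x2 y2 ->
    ~ ((y1 = a1 * x1 /\ y2 = b1 * x2) /\ (y1 = a2 * x1 /\ y2 = b2 * x2)).

Lemma graph_lines_disjointP (a1 b1 a2 b2 : CC) :
  graph_lines_disjoint a1 b1 a2 b2 <-> a1 != a2 /\ b1 != b2.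
Proof.
have one_neq0 : (1 : CC) <> 0 by apply/eqP; rewrite oner_eq0.
split=> [disj | [a12 b12] x1 y1 x2 y2 nz [[y1a1 y2b1] [y1a2 y2b2]]].
  split; apply/eqP => eq_ab.
  - apply: (disj 1 a1 0 0); first by case=> /one_neq0.
    by rewrite -eq_ab !mulr0 mulr1.
  - apply: (disj 0 0 1 b1); first by case=> _ [_ [/one_neq0]].
    by rewrite -eq_ab !mulr0 mulr1.
apply: nz; have [-> ->] := distinct_slopes_eq0 a12 y1a1 y1a2.
by have [-> ->] := distinct_slopes_eq0 b12 y2b1 y2b2.
Qed.

Section Families.

Variables (d : nat) (eta v : CC).
Hypothesis eta_prim : d.-primitive_root eta.

Lemma prim_expr_ord_eq (i j : 'I_d) : (eta ^+ i == eta ^+ j) = (i == j).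
Proof. by rewrite (eq_prim_root_expr eta_prim) !modn_small. Qed.

Lemma prim_expr_phi_plus_eq (p q : 'I_d * 'I_d) :
  (eta ^+ (p.1 + p.2) == eta ^+ (q.1 + q.2)) = (phi_plus p == phi_plus q).
Proof. by rewrite (eq_prim_root_expr eta_prim) /phi_plus addnC (addnC q.1). Qed.

Lemma lines_disjoint_fam0 (p q : 'I_d * 'I_d) :
  lines_disjoint eta v fam0 p.1 p.2 q.1 q.2 <-> p.1 != q.1 /\ p.2 != q.2.
Proof.
transitivity (graph_lines_disjoint (eta ^+ p.2) (eta ^+ p.1) (eta ^+ q.2) (eta ^+ q.1)).
  exact: iff_refl.
apply: iff_trans (graph_lines_disjointP _ _ _ _) _.
by rewrite !prim_expr_ord_eq; split=> -[].
Qed.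

Lemma lines_disjoint_fam1 (p q : 'I_d * 'I_d) :
  lines_disjoint eta v fam1 p.1 p.2 q.1 q.2 <-> p.2 != q.2 /\ phi_plus p != phi_plus q.
Proof.
transitivity (graph_lines_disjoint (eta ^+ (p.1 + p.2)) (eta ^+ p.2)
                                   (eta ^+ (q.1 + q.2)) (eta ^+ q.2)).
  split=> disj x1 y1 x2 y2 nz; [apply: (disj y1 y2 x1 x2) | apply: (disj x2 x1 y2 y1)];
    by move: nz; rewrite /nonzero_pt; tauto.
apply: iff_trans (graph_lines_disjointP _ _ _ _) _.
by rewrite prim_expr_phi_plus_eq prim_expr_ord_eq; split=> -[].
Qed.

Lemma lines_disjoint_fam2 (p q : 'I_d * 'I_d) : v != 0 ->
  lines_disjoint eta v fam2 p.1 p.2 q.1 q.2 <-> p.2 != q.2 /\ phi_plus p != phi_plus q.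
Proof.
move=> v_neq0.
transitivity (graph_lines_disjoint (v * eta ^+ p.2) (v * eta ^+ (p.1 + p.2))
                                   (v * eta ^+ q.2) (v * eta ^+ (q.1 + q.2))).
  split=> disj x1 y1 x2 y2 nz; [apply: (disj y1 y2 x2 x1) | apply: (disj y2 x1 x2 y1)];
    by move: nz; rewrite /nonzero_pt; tauto.
apply: iff_trans (graph_lines_disjointP _ _ _ _) _.
by rewrite !(inj_eq (mulfI v_neq0)) prim_expr_phi_plus_eq prim_expr_ord_eq.
Qed.

End Families.

Lemma pairwise_disjoint_inj (d : nat) (eta v : CC) (s : 'I_3) (T U : eqType)
    (f : 'I_d * 'I_d -> T) (g : 'I_d * 'I_d -> U) (P : {set 'I_d * 'I_d}) :
  (forall p q : 'I_d * 'I_d,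
     lines_disjoint eta v s p.1 p.2 q.1 q.2 <-> f p != f q /\ g p != g q) ->
  pairwise_disjoint eta v s P <-> {in P &, injective f} /\ {in P &, injective g}.
Proof.
move=> disjE; split=> [disj | [f_inj g_inj] p q pP qP pq].
  split=> p q pP qP /eqP; apply: contraTeq => pq;
    by have [] := (disjE p q).1 (disj p q pP qP pq).
apply/disjE; split.
  exact: contra_neq (f_inj p q pP qP) pq.
exact: contra_neq (g_inj p q pP qP) pq.
Qed.

Lemma uniq_graph_perm (T : finType) (s : seq (T * T)) :
  uniq (map fst s) -> uniq (map snd s) ->
  exists sigma : {perm T}, {in s, forall p, sigma p.1 = p.2}.
Proof.
elim: s => [|p s IHs] /=; first by exists 1%g.
case/andP=> p1_notin u1 /andP [p2_notin u2]; have [sigma sigmaE] := IHs u1 u2.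
exists (sigma * tperm (sigma p.1) p.2)%g => q; rewrite inE permM => /predU1P [-> | qs].
  exact: tpermL.
have sigma_q := sigmaE q qs; rewrite sigma_q tpermD //.
  rewrite -sigma_q (inj_eq perm_inj); apply: contraNneq p1_notin => ->.
  by apply/mapP; exists q.
by apply: contraNneq p2_notin => ->; apply/mapP; exists q.
Qed.

Lemma injective_graph_perm (T : finType) (S : {set T * T}) :
  {in S &, injective fst} -> {in S &, injective snd} ->
  exists sigma : {perm T}, {in S, forall p, sigma p.1 = p.2}.
Proof.
have uniq_enum (g : T * T -> T) : {in S &, injective g} -> uniq (map g (enum S)).
  by move=> g_inj; rewrite map_inj_in_uniq ?enum_uniq // => p q; rewrite !mem_enum; apply: g_inj.
move=> /uniq_enum fst_uniq /uniq_enum snd_uniq.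
have [sigma sigmaE] := uniq_graph_perm fst_uniq snd_uniq.
by exists sigma => p; rewrite -mem_enum; apply: sigmaE.
Qed.

Lemma sorted_set_enum (T : finType) (S : {set T}) (f : T -> nat) :
  {in S &, injective f} ->
  exists e : 'I_#|S| -> T, S = [set e j | j in 'I_#|S|] /\
    (forall j1 j2 : 'I_#|S|, (j1 < j2)%N -> (f (e j1) < f (e j2))%N).
Proof.
move=> f_inj; pose t := [tuple of sort (relpre f leq) (enum S)].
have memt x : (x \in t) = (x \in S) by rewrite mem_sort mem_enum.
exists (tnth t); split.
  apply/setP => x; apply/idP/imsetP => [|[j _ ->]]; last by rewrite -memt mem_tnth.
  by rewrite -memt => /tnthP [j ->]; exists j.
have sorted_ft : sorted ltn (map f t).
  rewrite ltn_sorted_uniq_leq map_inj_in_uniq ?sort_uniq ?enum_uniq; last first.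
    by move=> x y; rewrite !memt; apply: f_inj.
  by rewrite sorted_map sort_sorted // => x y; apply: leq_total.
move=> j1 j2 j12; have x0 : T := tnth t j1.
have := sorted_ltn_nth ltn_trans 0 sorted_ft j1 j2.
rewrite !inE size_map size_tuple !ltn_ord !(nth_map x0) ?size_tuple //.
by rewrite !(tnth_nth x0); apply.
Qed.

Lemma sorted_pair_set_enum (T U : finType) (S : {set T * U}) (f : T * U -> nat) :
  {in S &, injective f} ->
  exists (a : 'I_#|S| -> T) (b : 'I_#|S| -> U), S = [set (a j, b j) | j in 'I_#|S|] /\
    (forall j1 j2 : 'I_#|S|, (j1 < j2)%N -> (f (a j1, b j1) < f (a j2, b j2))%N).
Proof.
move=> /sorted_set_enum [e [eP e_incr]].
exists (fun j => (e j).1), (fun j => (e j).2); split.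
  by rewrite {1}eP; apply: eq_imset => j; case: (e j).
by move=> j1 j2; rewrite -!surjective_pairing; apply: e_incr.
Qed.

Lemma incr_ord_inj (m n : nat) (f : 'I_m -> 'I_n) :
  (forall j1 j2 : 'I_m, (j1 < j2)%N -> (f j1 < f j2)%N) -> injective f.
Proof. by move=> f_incr; apply/inc_inj/le_mono => j1 j2; apply: f_incr. Qed.

Lemma injective_graph_sorted_perm (d : nat) (P : {set 'I_d * 'I_d}) :
  {in P &, injective fst} /\ {in P &, injective snd} <->
  exists (m : nat) (a b : 'I_m -> 'I_d),
    [/\ P = [set (a j, b j) | j in 'I_m],
        #|P| = m,
        (forall j1 j2 : 'I_m, (j1 < j2)%N -> (a j1 < a j2)%N) &
        exists sigma : {perm 'I_d}, forall j : 'I_m, sigma (a j) = b j].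
Proof.
split=> [[fst_inj snd_inj] | [m [a [b [-> _ a_incr [sigma sigma_ab]]]]]].
  have val_fst_inj : {in P &, injective (fun p : 'I_d * 'I_d => val p.1)}.
    by move=> p q pP qP /val_inj; apply: fst_inj.
  have [a [b [Pab a_incr]]] := sorted_pair_set_enum val_fst_inj.
  have [sigma sigmaE] := injective_graph_perm fst_inj snd_inj.
  exists #|P|, a, b; split=> //.
  by exists sigma => j; apply: (sigmaE (a j, b j)); rewrite Pab imset_f.
have a_inj := incr_ord_inj a_incr.
split=> _ _ /imsetP [j1 _ ->] /imsetP [j2 _ ->] /=.
  by move/a_inj ->.
by rewrite -!sigma_ab => /perm_inj/a_inj ->.
Qed.

Lemma injective_snd_phi_plus_sorted (d : nat) (P : {set 'I_d * 'I_d}) :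
  {in P &, injective snd} /\ {in P &, injective (@phi_plus d)} <->
  exists (m : nat) (a b : 'I_m -> 'I_d),
    [/\ P = [set (a j, b j) | j in 'I_m],
        #|P| = m,
        (forall j1 j2 : 'I_m, (j1 < j2)%N -> (b j1 < b j2)%N) &
        {in ([set (a j, b j) | j in 'I_m] : {set 'I_d * 'I_d}) &, injective (@phi_plus d)}].
Proof.
split=> [[snd_inj phi_inj] | [m [a [b [-> _ b_incr phi_inj]]]]].
  have val_snd_inj : {in P &, injective (fun p : 'I_d * 'I_d => val p.2)}.
    by move=> p q pP qP /val_inj; apply: snd_inj.
  have [a [b [Pab b_incr]]] := sorted_pair_set_enum val_snd_inj.
  by exists #|P|, a, b; rewrite -Pab.
split=> // _ _ /imsetP [j1 _ ->] /imsetP [j2 _ ->] /=.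
by move/(incr_ord_inj b_incr) ->.
Qed.

Theorem corollary2p4 (d : nat) (eta v : CC) (C : {set line_label d}) :
  (3 <= d)%N ->
  d.-primitive_root eta ->
  v ^+ d = -1 ->
  (* (a) *)
  (pairwise_disjoint eta v fam0 (Cpart C fam0) <->
   exists (m : nat) (a b : 'I_m -> 'I_d),
     [/\ Cpart C fam0 = [set (a j, b j) | j in 'I_m],
         #|Cpart C fam0| = m,
         (forall j1 j2 : 'I_m, (j1 < j2)%N -> (a j1 < a j2)%N) &
         exists sigma : {perm 'I_d}, forall j : 'I_m, sigma (a j) = b j])
  /\
  (* (b) *)
  (pairwise_disjoint eta v fam1 (Cpart C fam1) <->
   exists (m : nat) (a b : 'I_m -> 'I_d),
     [/\ Cpart C fam1 = [set (a j, b j) | j in 'I_m],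
         #|Cpart C fam1| = m,
         (forall j1 j2 : 'I_m, (j1 < j2)%N -> (b j1 < b j2)%N) &
         {in ([set (a j, b j) | j in 'I_m] : {set 'I_d * 'I_d}) &, injective (@phi_plus d)}])
  /\
  (* (c) *)
  (pairwise_disjoint eta v fam2 (Cpart C fam2) <->
   exists (m : nat) (a b : 'I_m -> 'I_d),
     [/\ Cpart C fam2 = [set (a j, b j) | j in 'I_m],
         #|Cpart C fam2| = m,
         (forall j1 j2 : 'I_m, (j1 < j2)%N -> (b j1 < b j2)%N) &
         {in ([set (a j, b j) | j in 'I_m] : {set 'I_d * 'I_d}) &, injective (@phi_plus d)}]).
Proof.
move=> _ eta_prim v_d.
(* d >= 3 only matters for these to be all the lines of F_d. *)
have v_neq0 : v != 0.
  apply: contra_eq_neq v_d => ->; rewrite expr0n gtn_eqF ?(prim_order_gt0 eta_prim) //.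
  by rewrite eq_sym oppr_eq0 oner_eq0.
split; [|split].
- apply: iff_trans (injective_graph_sorted_perm _).
  by apply: pairwise_disjoint_inj => p q; apply: lines_disjoint_fam0.
- apply: iff_trans (injective_snd_phi_plus_sorted _).
  by apply: pairwise_disjoint_inj => p q; apply: lines_disjoint_fam1.
- apply: iff_trans (injective_snd_phi_plus_sorted _).
  by apply: pairwise_disjoint_inj => p q; apply: lines_disjoint_fam2.
Qed.
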